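(* Let $\Delta$ be an integer with $\Delta\ge 3$ and let $\varepsilon_{\Delta} = \tan(\pi/(4 (\Delta-1)))$ (so $\varepsilon_\Delta\in(0,1)$). Let $G = (V, E)$ be a graph of maximum degree at most $\Delta$. Then $Z_{\mathrm{Ising}}(G; \beta) \ne 0$ for every $\beta \in \mathbb{C}$ with $\lvert \beta - 1\rvert / \lvert \beta + 1 \rvert \le \varepsilon_\Delta$.
   Context: Graphs are undirected and may have multiple edges or loops. For a graph $G=(V,E)$ and $\beta\in\mathbb{C}$, the partition function of the Ising model is $Z_{\mathrm{Ising}}(G;\beta)=\sum_{\sigma\colon V\to\{0,1\}}\beta^{m(\sigma)}$, where $m(\sigma)$ is the number of edges of $G$ whose two endpoints receive the same value under $\sigma$ (monochromatic edges). *)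

From mathcomp Require Import all_boot all_order all_algebra.
From mathcomp Require Import reals trigo.
From mathcomp Require Export complex.
Set Implicit Arguments. Unset Strict Implicit. Unset Printing Implicit Defensive.
Import GRing.Theory Num.Theory.
Local Open Scope ring_scope.

(* A finite multigraph (multiple edges and loops allowed) is given by a finite
   vertex type V, a finite edge type E and an endpoint map [ends : E -> V * V]. *)

(* Degree of v: number of edge-endpoint incidences at v (a loop counts twice). *)
Definition mdeg (V E : finType) (ends : E -> V * V) (v : V) : nat :=
  (#|[set e | (ends e).1 == v]| + #|[set e | (ends e).2 == v]|)%N.

Definition mono (V E : finType) (ends : E -> V * V) (sigma : {ffun V -> bool}) : nat :=
  #|[set e | sigma (ends e).1 == sigma (ends e).2]|.

Definition Z_Ising (V E : finType) (ends : E -> V * V) (C : comRingType) (beta : C) : C :=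
  \sum_(sigma : {ffun V -> bool}) beta ^+ mono ends sigma.

Definition eps_Delta (R : realType) (Delta : nat) : R :=
  tan (pi / (4 * (Delta - 1))%:R).

From mathcomp Require Import all_boot all_order all_algebra.
From mathcomp Require Import reals trigo complex.
From mathcomp Require Import ring lra.
Import Order.TTheory GRing.Theory Num.Theory.
Local Open Scope ring_scope.
Local Open Scope complex_scope.

(* Write beta = (1 + w) / (1 - w); the hypothesis says |w| <= tan theta with
   theta = pi / (4 (Delta - 1)).  Pinning the spins at a vertex one half-edge at
   a time factors the partition function into ratios, one per half-edge, each
   either beta^{+-1} or (beta P + 1) / (P + beta), where P is a product of at
   most Delta - 1 such ratios at a neighbouring vertex.  Inductively all ratios
   lie in the sector |arg z| <= 2 theta = pi / (2 (Delta - 1)): a product of at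
   most Delta - 1 of them lies in the closed right half-plane, and on that
   half-plane P |-> (beta P + 1) / (P + beta) equals (1 + w m) / (1 - w m) with
   |m| <= 1, so it lands in the Cayley image of the disc |z| <= tan theta, which
   is contained in the sector.  Finally Z factors as (1 + a product of at most
   Delta ratios) times a partition function with one free vertex less, and a
   product of Delta elements of the sector is never -1. *)

Section Sectors.
Context {R : rcfType}.
Implicit Types (a b C S c s : R) (x z w beta P : R[i]).

Definition halfplane z := z != 0 /\ 0 <= complex.Re z.

(* With (C, S) = k (cos t, sin t), k > 0, this is the sector |arg z| <= t. *)
Definition sector C S z := halfplane z /\ `|complex.Im z| * C <= complex.Re z * S.

Lemma sector_Complex C S a b :
  0 < a -> `|b| * C <= a * S -> sector C S (a +i* b).
Proof.
move=> a_gt0 hab; split=> //; split; last exact: ltW.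
by apply/eqP; case=> a0; rewrite a0 ltxx in a_gt0.
Qed.

Lemma halfplane_cayley P : halfplane P -> P + 1 != 0 /\ `|(P - 1) / (P + 1)| <= 1.
Proof.
case: P => a b [_ /= a_ge0].
have -> : (a +i* b) + 1 = (a + 1) +i* b by simpc.
have -> : (a +i* b) - 1 = (a - 1) +i* b by simpc.
have nz : (a + 1) +i* b != 0 by apply/eqP; case=> ha _; lra.
split=> //; rewrite normrM normrV ?unitfE // ler_pdivrMr ?normr_gt0 // mul1r.
rewrite !normc_def /= lecR ler_sqrt; last by rewrite addr_ge0 ?sqr_ge0.
by rewrite lerD2r; nra.
Qed.

(* For z = x + i y, (1 + z) / (1 - z) = (1 - |z|^2 + 2 i y) / |1 - z|^2, and as
   |y| <= |z| the sector inequality follows from (|z| c - s) (c + |z| s) <= 0. *)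
Lemma cayley_disc_sector c s z : 0 < c -> 0 <= s < c -> `|z| <= (s / c)%:C ->
  sector (c * c - s * s) (s * c + c * s) ((1 + z) / (1 - z)).
Proof.
case: z => x y c_gt0 /andP[s_ge0 s_lt_c]; rewrite normc_def /= lecR ler_pdivlMr //.
set r := Num.sqrt _ => hr.
have r_ge0 : 0 <= r by apply: sqrtr_ge0.
have r2 : r ^+ 2 = x ^+ 2 + y ^+ 2 by rewrite sqr_sqrtr // addr_ge0 ?sqr_ge0.
have y_le_r : `|y| <= r by rewrite -sqrtr_sqr ler_sqrt ?addr_ge0 ?sqr_ge0 // lerDr sqr_ge0.
clearbody r.
have r_lt1 : r < 1 by nra.
set n := (1 - x) ^+ 2 + y ^+ 2.
have x_lt1 : x < 1 by nra.
have n_gt0 : 0 < n by rewrite /n; nra.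
have nz : 1 - (x +i* y) != 0 by apply/eqP; simpc; case=> hx _; lra.
have -> : (1 + (x +i* y)) / (1 - (x +i* y)) = ((1 - r ^+ 2) / n) +i* ((2 * y) / n).
  apply: (mulIf nz); rewrite mulfVK //; simpc.
  by congr Complex; rewrite r2 /n; field; rewrite -/n gt_eqF.
apply: sector_Complex; first by apply: divr_gt0 => //; nra.
have ni_gt0 : 0 < n^-1 by rewrite invr_gt0.
rewrite !normrM [`|2|]ger0_norm // [`|n^-1|]gtr0_norm //.
rewrite mulrAC [leRHS]mulrAC ler_pM2r //.
have cs_ge0 : 0 <= c * c - s * s by nra.
have : (r * c - s) * (c + r * s) <= 0 by apply: mulr_le0_ge0; nra.
nra.
Qed.

Lemma sector_mul_ineq (a b B D C1 S1 C2 S2 : R) :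
    0 <= a -> 0 <= b -> 0 <= B -> 0 <= D -> 0 < C1 -> 0 < C2 -> 0 <= S1 -> 0 <= S2 ->
    0 <= C1 * C2 - S1 * S2 -> B * C1 <= a * S1 -> D * C2 <= b * S2 ->
  B * D <= a * b /\
  (a * D + B * b) * (C1 * C2 - S1 * S2) <= (a * b - B * D) * (S1 * C2 + C1 * S2).
Proof.
move=> a0 b0 B0 D0 C10 C20 S10 S20 K0 h1 h2.
have P0 : 0 < C1 * C2 by apply: mulr_gt0.
have hBD : B * C1 * (D * C2) <= a * S1 * (b * S2)
  by apply: ler_pM => //; apply: mulr_ge0 => //; apply: ltW.
have hL : (a * D + B * b) * (C1 * C2) <= a * b * (S1 * C2 + C1 * S2).
  have := ler_wpM2l (mulr_ge0 a0 (ltW C10)) h2.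
  have := ler_wpM2l (mulr_ge0 b0 (ltW C20)) h1.
  nra.
have hK : a * b * (C1 * C2 - S1 * S2) <= (a * b - B * D) * (C1 * C2).
  rewrite -subr_ge0 [leRHS](_ : _ = a * S1 * (b * S2) - B * C1 * (D * C2)).
    by rewrite subr_ge0.
  by ring.
have L0 : 0 <= S1 * C2 + C1 * S2 by rewrite addr_ge0 // mulr_ge0 // ltW.
split.
  have : 0 <= (a * b - B * D) * (C1 * C2).
    by apply: le_trans hK; rewrite !mulr_ge0.
  by rewrite pmulr_lge0 // subr_ge0.
rewrite -(ler_pM2r P0).
apply: (le_trans (y := a * b * (S1 * C2 + C1 * S2) * (C1 * C2 - S1 * S2))).
  by rewrite mulrAC; apply: ler_wpM2r.
by rewrite mulrAC [leRHS]mulrAC; apply: ler_wpM2r.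
Qed.

Lemma sector_mul C1 S1 C2 S2 z1 z2 :
    0 < C1 -> 0 < C2 -> 0 <= S1 -> 0 <= S2 -> 0 <= C1 * C2 - S1 * S2 ->
    sector C1 S1 z1 -> sector C2 S2 z2 ->
  sector (C1 * C2 - S1 * S2) (S1 * C2 + C1 * S2) (z1 * z2).
Proof.
move=> C10 C20 S10 S20 K0; case: z1 => a b; case: z2 => c d.
move=> [[nz1 /= a0] h1] [[nz2 /= c0] h2].
have [BD hK] := sector_mul_ineq a c `|b| `|d| C1 S1 C2 S2 a0 c0 (normr_ge0 b) (normr_ge0 d)
  C10 C20 S10 S20 K0 h1 h2.
have bd : b * d <= `|b| * `|d| by rewrite -normrM ler_norm.
have nz : (a +i* b) * (c +i* d) != 0 by rewrite mulf_neq0.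
move: nz; simpc => nz; split; first by split => //=; lra.
have L0 : 0 <= S1 * C2 + C1 * S2 by rewrite addr_ge0 // mulr_ge0 // ltW.
have him : `|a * d + b * c| <= a * `|d| + `|b| * c.
  by apply: le_trans (ler_normD _ _) _; rewrite !normrM (ger0_norm a0) (ger0_norm c0).
apply: le_trans (ler_wpM2r K0 him) (le_trans hK (ler_wpM2r L0 _)) => /=.
by rewrite lerD2l lerN2.
Qed.

Lemma sector_mul_halfplane_neqN1 C S x P :
  0 < C -> sector C S x -> halfplane P -> x * P != -1.
Proof.
case: x => a b; case: P => c d C0 [[nzx /= a0] hab] [_ /= c0].
have {a0} a_gt0 : 0 < a.
  rewrite lt_def a0 andbT; apply: contra_neq nzx => a_eq0.
  move: hab; rewrite a_eq0 mul0r pmulr_lle0 // normr_le0 => /eqP b0.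
  by rewrite b0.
simpc; apply/eqP; case=> e1 e2.
have : a * (a * c - b * d) + b * (a * d + b * c) = c * (a ^+ 2 + b ^+ 2) by ring.
by rewrite e1 e2; nra.
Qed.

(* With m = (P - 1) / (P + 1) in the unit disc, the Moebius image of P is
   (1 + w m) / (1 - w m) and |w m| <= |w|. *)
Lemma mobius_halfplane_sector c s w beta P :
    0 < c -> 0 <= s < c -> `|w| <= (s / c)%:C -> beta = (1 + w) / (1 - w) ->
    halfplane P ->
  P + beta != 0 /\ sector (c * c - s * s) (s * c + c * s) ((beta * P + 1) / (P + beta)).
Proof.
move=> c_gt0 /andP[s_ge0 s_lt_c] hw -> hP.
have [P1 hm] := halfplane_cayley _ hP; set m := (P - 1) / (P + 1) in hm.
have sc_ge0 : (0 : R[i]) <= (s / c)%:C by rewrite lecR divr_ge0 // ltW.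
have hwm : `|w * m| <= (s / c)%:C.
  by rewrite normrM -[leRHS]mulr1 ler_pM.
have neq1 z : `|z| <= (s / c)%:C -> 1 - z != 0.
  move=> hz; rewrite subr_eq0; apply: contraTneq hz => <-.
  by rewrite normr1 -[1 : R[i]]/(1%:C) lecR -ltNge ltr_pdivrMr // mul1r.
have w1 := neq1 _ hw; have wm1 := neq1 _ hwm.
have eP : P + (1 + w) / (1 - w) = (P + 1) * (1 - w * m) / (1 - w).
  by rewrite /m; field; rewrite w1 P1.
split; first by rewrite eP !mulf_neq0 // invr_eq0.
have -> : ((1 + w) / (1 - w) * P + 1) / (P + (1 + w) / (1 - w))
          = (1 + w * m) / (1 - w * m).
  have e : P + 1 - w * (P - 1) = (P + 1) * (1 - w * m) by rewrite /m; field.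
  by rewrite eP /m; field; rewrite -/m e P1 w1 mulf_neq0.
by apply: cayley_disc_sector; rewrite ?s_ge0.
Qed.

End Sectors.

Section SectorProducts.
Context {R : realType}.
Implicit Types (a : R) (l : seq R[i]).

Let cos_sin_ge0 {a} : 0 <= a -> a <= pi / 2 -> 0 <= cos a /\ 0 <= sin a.
Proof.
move=> a0 a_le; have pi0 := pi_gt0 R.
by split; [apply: cos_ge0_pihalf | apply: sin_ge0_pi]; apply/andP; split; lra.
Qed.

Lemma sector_prod a l : 0 < a < pi / 2 -> a *+ size l <= pi / 2 ->
    {in l, forall x, sector (cos a) (sin a) x} ->
  sector (cos (a *+ size l)) (sin (a *+ size l)) (\prod_(x <- l) x).
Proof.
move=> /andP[a_gt0 a_lt]; have pi0 := pi_gt0 R.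
elim: l => [|x l IHl] /= hl lK.
  rewrite big_nil mulr0n cos0 sin0.
  by split; first split; rewrite /= ?oner_neq0 ?normr0 ?mul0r ?mulr0.
have al_ge0 : 0 <= a *+ size l by rewrite mulrn_wge0 ?ltW.
have al_lt : a *+ size l < pi / 2 by move: hl; rewrite mulrS; lra.
have [_ sa_ge0] := cos_sin_ge0 (ltW a_gt0) (ltW a_lt).
have [_ sal_ge0] := cos_sin_ge0 al_ge0 (ltW al_lt).
have [K0 _] := cos_sin_ge0 (mulrn_wge0 _ (ltW a_gt0)) hl.
rewrite big_cons mulrS cosD sinD; rewrite mulrS cosD in K0.
apply: sector_mul => //.
- by apply: cos_gt0_pihalf; apply/andP; split; lra.
- by apply: cos_gt0_pihalf; apply/andP; split; lra.
- by apply: lK; rewrite mem_head.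
- by apply: IHl; [lra | move=> y yl; apply: lK; rewrite in_cons yl orbT].
Qed.

Lemma sector_prod_halfplane a l : 0 < a < pi / 2 -> a *+ size l <= pi / 2 ->
  {in l, forall x, sector (cos a) (sin a) x} -> halfplane (\prod_(x <- l) x).
Proof. by move=> a_bd al lK; case: (sector_prod a l a_bd al lK). Qed.

Lemma sector_prod_neqN1 a n l : 0 < a < pi / 2 -> a *+ n <= pi / 2 ->
  (size l <= n.+1)%N -> {in l, forall x, sector (cos a) (sin a) x} ->
  \prod_(x <- l) x != -1.
Proof.
move=> a_bd an; have /andP[a_gt0 a_lt] := a_bd.
case: l => [|x l] /= hl lK.
  by rewrite big_nil -addr_eq0 -mulr2n pnatr_eq0.
rewrite big_cons; apply: (@sector_mul_halfplane_neqN1 _ (cos a) (sin a)).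
- by apply: cos_gt0_pihalf; rewrite a_lt andbT; have := pi_gt0 R; lra.
- by apply: lK; rewrite mem_head.
apply: (sector_prod_halfplane a) => //.
  by rewrite ltnS in hl; exact: le_trans (ler_wpMn2l (ltW a_gt0) hl) an.
by move=> y yl; apply: lK; rewrite in_cons yl orbT.
Qed.

End SectorProducts.

Section HalfEdges.
Context {V E : finType} (ends : E -> V * V).
Implicit Types (U : {set V}) (u v : V) (h g : E * bool) (p : E * bool -> bool)
  (s : {ffun V -> bool}).

Definition endp h : V := if h.2 then (ends h.1).2 else (ends h.1).1.
Definition opp h : E * bool := (h.1, ~~ h.2).

Lemma opp_opp h : opp (opp h) = h.
Proof. by case: h => e b; rewrite /opp negbK. Qed.

Lemma card_endp v : #|[pred h | endp h == v]| = mdeg ends v.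
Proof.
rewrite /mdeg -!sum1_card !big_mkcond /=.
rewrite -(pair_big xpredT xpredT (fun e b => if endp (e, b) == v then 1 else 0)%N) /=.
rewrite [\sum_(e in [set e | (ends e).1 == v]) 1]big_mkcond.
rewrite [\sum_(e in [set e | (ends e).2 == v]) 1]big_mkcond.
rewrite addnC -big_split /=; apply: eq_bigr => e _.
by rewrite big_bool /endp /= !inE.
Qed.

Definition pin p v b h := if endp h == v then b else p h.

Definition supported U s := [forall x, s x ==> (x \in U)].

Definition hspin U p s h := if endp h \in U then s (endp h) else p h.

Lemma hspin_setD1 U p s u b : u \in U ->
  hspin U p (finfun [eta s with u |-> b]) =1 hspin (U :\ u) (pin p u b) s.
Proof.
move=> uU h; rewrite /hspin /pin in_setD1 ffunE /=.
by case: (endp h =P u) => [->|_] //=; rewrite uU.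
Qed.

Lemma sum_supported_setD1 (F : nmodType) (G : {ffun V -> bool} -> F) U u b :
    u \in U ->
  \sum_(s | supported U s && (s u == b)) G s
    = \sum_(s | supported (U :\ u) s) G (finfun [eta s with u |-> b]).
Proof.
move=> uU; rewrite (reindex_onto (fun s => finfun [eta s with u |-> b])
                                 (fun s => finfun [eta s with u |-> false])); last first.
  move=> s /andP[_ /eqP su]; apply/ffunP => x; rewrite !ffunE /=.
  by case: eqP => [->|/eqP ne]; rewrite ?su // ffunE /= (negbTE ne).
apply: eq_bigl => s; rewrite /supported ffunE /= eqxx eqxx andbT.
apply/idP/forallP => [/andP[/forallP sU /eqP <-] x | sU].
  by rewrite ffunE in_setD1 /=; case: eqP.
have su : s u = false by have := sU u; rewrite in_setD1 eqxx; case: (s u).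
apply/andP; split.
  apply/forallP => x; rewrite ffunE /=; case: eqP => [->|_]; first by rewrite uU implybT.
  by apply/implyP => /(implyP (sU x)); rewrite in_setD1 => /andP[].
apply/eqP/ffunP => x; rewrite ffunE /=; case: eqP => [->|/eqP ne] //.
by rewrite ffunE /= (negbTE ne).
Qed.

Section PartitionFunction.
Context {F : fieldType} (beta : F).

Definition weight U p s : F :=
  \prod_(e : E) (if hspin U p s (e, false) == hspin U p s (e, true) then beta else 1).

(* In [Zpin U p] the vertices of U are free, while a half-edge h whose endpoint
   lies outside U carries its own boundary spin p h; configurations are taken
   supported in U so that each spin assignment on U is counted once. *)
Definition Zpin U p : F := \sum_(s | supported U s) weight U p s.

Definition edge_ratio b : F := if b then beta else beta^-1.

Lemma Zpin_ext U p1 p2 : p1 =1 p2 -> Zpin U p1 = Zpin U p2.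
Proof.
by move=> p12; apply: eq_bigr => s _; apply: eq_bigr => e _; rewrite /hspin !p12.
Qed.

Lemma Zpin_split U p u : u \in U ->
  Zpin U p = Zpin (U :\ u) (pin p u true) + Zpin (U :\ u) (pin p u false).
Proof.
move=> uU; rewrite /Zpin (bigID (fun s => s u)) /=.
have eqb b : \sum_(s | supported U s && (s u == b)) weight U p s
             = \sum_(s | supported (U :\ u) s) weight (U :\ u) (pin p u b) s.
  rewrite sum_supported_setD1 //; apply: eq_bigr => s _.
  by apply: eq_bigr => e _; rewrite !hspin_setD1.
by rewrite -!eqb; congr (_ + _); apply: eq_bigl => s; case: (s u); rewrite ?andbT ?andbF.
Qed.

Lemma Zpin_flip_boundary U p h : beta != 0 ->
    endp h \notin U -> endp (opp h) \notin U ->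
  Zpin U [eta p with h |-> true] = edge_ratio (p (opp h)) * Zpin U [eta p with h |-> false].
Proof.
case: h => e c b0 hU oU; rewrite /Zpin mulr_sumr; apply: eq_bigr => s _.
rewrite /weight (bigD1 e) //= [in RHS](bigD1 e) //= mulrA; congr (_ * _).
  move: hU oU; rewrite /opp /hspin /=.
  by case: c => /= /negbTE -> /negbTE ->; rewrite !xpair_eqE !eqxx /=;
    case: (p _); rewrite /edge_ratio /= ?mulr1 ?mulVf.
apply: eq_bigr => e' ne; rewrite /hspin /= -!pair_eqE /= (negbTE ne) //.
Qed.

Lemma Zpin_set0_neq0 p : beta != 0 -> Zpin set0 p != 0.
Proof.
move=> b0; rewrite /Zpin (big_pred1 [ffun => false]); last first.
  move=> s /=; apply/forallP/eqP => [sU|->]; last by move=> x; rewrite ffunE.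
  by apply/ffunP => x; have := sU x; rewrite ffunE inE implybF => /negbTE.
by apply/prodf_neq0 => e _; case: ifP; rewrite ?oner_neq0.
Qed.

Lemma Z_Ising_Zpin p : Z_Ising ends beta = Zpin setT p.
Proof.
rewrite /Z_Ising /Zpin; apply: eq_big => [s|s _].
  by apply/esym/forallP => x; rewrite in_setT implybT.
rewrite /mono -prodr_const big_mkcond; apply: eq_bigr => e _.
by rewrite inE /hspin !in_setT.
Qed.


Section FlipRatios.
Variables (K H : F -> Prop) (n : nat).
Hypothesis beta_neq0 : beta != 0.
Hypothesis K_edge_ratio : forall b, K (edge_ratio b).
Hypothesis mobius_H_K : forall P, H P -> P + beta != 0 /\ K ((beta * P + 1) / (P + beta)).
Hypothesis prod_K_H : forall l : seq F,
  {in l, forall x, K x} -> (size l <= n)%N -> H (\prod_(x <- l) x).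
Hypothesis prod_K_neqN1 : forall l : seq F,
  {in l, forall x, K x} -> (size l <= n.+1)%N -> \prod_(x <- l) x != -1.
Hypothesis mdeg_le : forall v, (mdeg ends v <= n.+1)%N.

Let prod_K_seq (P : pred (E * bool)) (m : E * bool -> F) :
    (forall h, P h -> K (m h)) ->
  [/\ \prod_(h | P h) m h = \prod_(x <- [seq m h | h <- enum P]) x,
      {in [seq m h | h <- enum P], forall x, K x} &
      size [seq m h | h <- enum P] = #|P|].
Proof.
move=> mK; split; first by rewrite big_map big_enum.
  by move=> x /mapP[h]; rewrite mem_enum => Ph ->; apply: mK.
by rewrite size_map -cardE.
Qed.

Definition flip_factorizes U := forall p v, v \notin U -> exists m : E * bool -> F,
  [/\ Zpin U (pin p v true) = (\prod_(h | endp h == v) m h) * Zpin U (pin p v false),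
      forall h, endp h == v -> K (m h) &
      forall h, endp h == v -> endp (opp h) \notin U -> endp (opp h) != v ->
        m h = edge_ratio (p (opp h))].

Lemma flip_ratio_inner U p h : endp h \notin U -> endp (opp h) \in U ->
    flip_factorizes (U :\ endp (opp h)) ->
  exists2 r, Zpin U [eta p with h |-> true] = r * Zpin U [eta p with h |-> false] & K r.
Proof.
set u := endp (opp h) => hU uU IH; set W := U :\ u.
have hW : endp h \notin W by rewrite in_setD1 (negbTE hU) andbF.
have uW : u \notin W by rewrite in_setD1 eqxx.
have hu : endp h != u by apply: contraNneq hU => ->.
have [m [em mK mb]] := IH [eta p with h |-> true] u uW.
set P := \prod_(g | (endp g == u) && (g != opp h)) m g.
have HP : H P.
  have mK' g : (endp g == u) && (g != opp h) -> K (m g) by case/andP=> /mK.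
  rewrite /P; have [-> lK size_l] := prod_K_seq _ _ mK'.
  apply: prod_K_H lK _; rewrite size_l -ltnS.
  apply: leq_trans (mdeg_le u).
  rewrite -card_endp (cardD1 (opp h) [pred g | endp g == u]) inE eqxx add1n ltnS.
  by apply: subset_leq_card; apply/subsetP => g; rewrite !inE andbC.
have prod_u : \prod_(g | endp g == u) m g = beta * P.
  by rewrite (bigD1 (opp h)) ?eqxx //= mb ?opp_opp ?eqxx //= eqxx.
have pin_upd b t : pin [eta p with h |-> b] u t =1 [eta pin p u t with h |-> b].
  by move=> g; rewrite /pin /=; case: (g =P h) => [->|]; rewrite ?(negbTE hu).
have Zsplit b : Zpin U [eta p with h |-> b] =
    Zpin W [eta pin p u true with h |-> b] + Zpin W [eta pin p u false with h |-> b].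
  by rewrite (Zpin_split _ _ _ uU) !(Zpin_ext _ _ _ (pin_upd b _)).
have flip t : Zpin W [eta pin p u t with h |-> true] =
    edge_ratio t * Zpin W [eta pin p u t with h |-> false].
  by rewrite Zpin_flip_boundary // /pin eqxx.
set X := Zpin W [eta pin p u false with h |-> true].
have eTT : Zpin W [eta pin p u true with h |-> true] = beta * P * X.
  by rewrite -(Zpin_ext _ _ _ (pin_upd true true)) em prod_u (Zpin_ext _ _ _ (pin_upd true false)).
have eTF : Zpin W [eta pin p u true with h |-> false] = P * X.
  by apply: (mulfI beta_neq0); rewrite mulrA -eTT flip.
have eFF : Zpin W [eta pin p u false with h |-> false] = beta * X.
  by rewrite /X flip /edge_ratio /= mulrA mulfV ?mul1r.
(* Splitting at u: Zpin U [eta p with h |-> true] = (beta P + 1) X and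
   Zpin U [eta p with h |-> false] = (P + beta) X. *)
have [PB rK] := mobius_H_K P HP.
by exists ((beta * P + 1) / (P + beta)) => //; rewrite !Zsplit eTT eTF eFF /X; field.
Qed.

Lemma flip_ratio U p h : endp h \notin U ->
    (forall u, u \in U -> flip_factorizes (U :\ u)) ->
  exists r, [/\ Zpin U [eta p with h |-> true] = r * Zpin U [eta p with h |-> false],
    K r & endp (opp h) \notin U -> r = edge_ratio (p (opp h))].
Proof.
move=> hU IH; have [uU|uU] := boolP (endp (opp h) \in U).
  by have [r er rK] := flip_ratio_inner U p h hU uU (IH _ uU); exists r; split; rewrite // uU.
by exists (edge_ratio (p (opp h))); split; rewrite ?Zpin_flip_boundary.
Qed.

Lemma flip_telescope U p v l : v \notin U ->
    (forall u, u \in U -> flip_factorizes (U :\ u)) ->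
    uniq l -> {in l, forall h, endp h == v} ->
  exists m : E * bool -> F,
  [/\ Zpin U (fun g => if endp g == v then g \in l else p g)
        = (\prod_(h <- l) m h) * Zpin U (pin p v false),
      {in l, forall h, K (m h)} &
      {in l, forall h, endp (opp h) \notin U -> endp (opp h) != v ->
        m h = edge_ratio (p (opp h))}].
Proof.
move=> vU IH; elim: l => [|h l IHl].
  by move=> _ _; exists (fun _ => 1); split=> //; rewrite big_nil mul1r.
rewrite cons_uniq => /andP[hl ul] lv.
have [m [em mK mb]] := IHl ul (sub_in1 (@mem_behead _ (h :: l)) lv).
have hv : endp h == v := lv h (mem_head _ _).
set q := fun g => if endp g == v then g \in l else p g.
have hU : endp h \notin U by rewrite (eqP hv).
have [r [er rK rb]] := flip_ratio U q h hU IH.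
exists [eta m with h |-> r]; split.
- rewrite big_cons /= eqxx (eq_big_seq m) => [|g gl]; last first.
    by case: eqP => // gh; move: hl; rewrite -gh gl.
  have -> : Zpin U (fun g => if endp g == v then g \in h :: l else p g)
            = Zpin U [eta q with h |-> true].
    by apply: Zpin_ext => g /=; rewrite /q in_cons; case: (g =P h) => [->|]; rewrite ?hv.
  rewrite er -mulrA -em; congr (_ * _); apply: Zpin_ext => g /=; rewrite /q.
  by case: (g =P h) => [->|//]; rewrite hv (negbTE hl).
- move=> g; rewrite in_cons /=; case: eqP => [_ _|_ /= gl]; [exact: rK | exact: mK].
- move=> g; rewrite in_cons /=; case: eqP => [-> _ oU ov | _ /= gl]; last exact: mb.
  by rewrite rb // /q (negbTE ov).
Qed.

Lemma flip_factorizes_step U :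
  (forall u, u \in U -> flip_factorizes (U :\ u)) -> flip_factorizes U.
Proof.
move=> IH p v vU.
have lv : {in enum [pred h | endp h == v], forall h, endp h == v}.
  by move=> h; rewrite mem_enum.
have [m [em mK mb]] := flip_telescope U p _ _ vU IH (enum_uniq _) lv.
exists m; split=> [|h hv|h hv]; rewrite -?big_enum; last 2 first.
- by apply: mK; rewrite mem_enum.
- by apply: mb; rewrite mem_enum.
by rewrite -em; apply: Zpin_ext => g; rewrite /pin mem_enum inE; case: eqP.
Qed.

Lemma flip_factorizes_all U : flip_factorizes U.
Proof.
have [k] := ubnP #|U|; elim: k U => // k IHk U ltUk.
apply: flip_factorizes_step => u uU; apply: IHk.
by move: ltUk; rewrite (cardsD1 u U) uU add1n ltnS.
Qed.

Lemma Zpin_neq0 U p : Zpin U p != 0.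
Proof.
have [k] := ubnP #|U|; elim: k U p => // k IHk U p ltUk.
have [->|[v vU]] := set_0Vmem U; first exact: Zpin_set0_neq0.
have vW : v \notin U :\ v by rewrite in_setD1 eqxx.
have [m [em mK _]] := flip_factorizes_all _ p _ vW.
rewrite (Zpin_split _ _ _ vU) em -{2}[Zpin _ (pin p v false)]mul1r -mulrDl.
apply: mulf_neq0; last by apply: IHk; move: ltUk; rewrite (cardsD1 v U) vU add1n ltnS.
rewrite addr_eq0; have [-> lK size_l] := prod_K_seq _ _ mK.
by apply: prod_K_neqN1 lK _; rewrite size_l card_endp.
Qed.

Lemma Z_Ising_neq0 : Z_Ising ends beta != 0.
Proof. by rewrite (Z_Ising_Zpin (fun _ => false)) Zpin_neq0. Qed.

End FlipRatios.

End PartitionFunction.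
End HalfEdges.

Section IsingSector.
Context {R : realType} (n : nat).
Hypothesis n_ge2 : (2 <= n)%N.

Let theta : R := pi / (4 * n)%:R.
Let a := theta + theta.

Let n_gt0 : (0 < n)%N. Proof. exact: leq_trans n_ge2. Qed.

Let a_n : a *+ n = pi / 2.
Proof. by rewrite /a /theta -mulr_natr natrM; field; rewrite pnatr_eq0 -lt0n. Qed.

Let a_bounds : 0 < a < pi / 2.
Proof.
have a_gt0 : 0 < a by rewrite /a /theta addr_gt0 // divr_gt0 ?pi_gt0 // ltr0n muln_gt0.
rewrite a_gt0 -a_n -[ltLHS]mulr1n ltr_pMn2l //.
Qed.

Let cos_sin_theta : 0 < cos theta /\ 0 <= sin theta < cos theta.
Proof.
have /andP[a_gt0 a_lt] := a_bounds; rewrite /a in a_gt0 a_lt.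
have c_gt0 : 0 < cos theta by apply: cos_gt0_pihalf; apply/andP; split; lra.
have s_ge0 : 0 <= sin theta by apply: sin_ge0_pi; apply/andP; split; lra.
have : 0 < cos a by apply: cos_gt0_pihalf; apply/andP; split; rewrite /a; lra.
by rewrite /a cosD s_ge0 => ca; split => //; nra.
Qed.

Lemma cayley_tan_sector z : `|z| <= (tan theta)%:C ->
  sector (cos a) (sin a) ((1 + z) / (1 - z)).
Proof.
have [c_gt0 sc] := cos_sin_theta.
by rewrite /a cosD sinD; apply: cayley_disc_sector.
Qed.

Variables (beta w : R[i]).
Hypotheses (hw : `|w| <= (tan theta)%:C) (hbeta : beta = (1 + w) / (1 - w)).

Lemma sector_edge_ratio b : sector (cos a) (sin a) (edge_ratio beta b).
Proof.
rewrite /edge_ratio hbeta; case: b; first exact: cayley_tan_sector.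
have -> : ((1 + w) / (1 - w))^-1 = (1 + - w) / (1 - - w) by rewrite invf_div opprK.
by apply: cayley_tan_sector; rewrite normrN.
Qed.

Lemma Z_Ising_neq0_cayley (V E : finType) (ends : E -> V * V) :
  (forall v, (mdeg ends v <= n.+1)%N) -> Z_Ising ends beta != 0.
Proof.
have [c_gt0 sc] := cos_sin_theta; have /andP[a_gt0 a_lt] := a_bounds.
apply: (Z_Ising_neq0 _ _ (sector (cos a) (sin a)) halfplane n).
- by have [[]] := sector_edge_ratio true.
- exact: sector_edge_ratio.
- by move=> P; rewrite /a cosD sinD; apply: (mobius_halfplane_sector _ _ w).
- move=> l lK ln; apply: (sector_prod_halfplane a) => //.
  by rewrite -a_n ler_wpMn2l // ltW.
- by move=> l lK ln; apply: (sector_prod_neqN1 a n) => //; rewrite a_n.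
Qed.

End IsingSector.

Theorem theorem1p1 (R : realType) (Delta : nat) (V E : finType)
    (ends : E -> V * V) (beta : R[i]) :
  (3 <= Delta)%N ->
  (forall v : V, (mdeg ends v <= Delta)%N) ->
  beta != -1 ->
  `|beta - 1| / `|beta + 1| <= (eps_Delta R Delta)%:C ->
  Z_Ising ends beta != 0.
Proof.
move=> Delta_ge3 mdeg_le beta_neqN1 hbeta.
have beta1 : beta + 1 != 0 by rewrite addr_eq0.
have n_ge2 : (2 <= Delta - 1)%N by rewrite ltn_subRL.
apply: (Z_Ising_neq0_cayley _ n_ge2 beta ((beta - 1) / (beta + 1))).
- by rewrite normrM normfV.
- have two : beta + 1 - (beta - 1) = 2 by ring.
  by field; rewrite beta1 two pnatr_eq0.
- by rewrite subn1 prednK ?(leq_trans _ Delta_ge3).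
Qed.
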